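(* With $Z,G,B,Y$ and $q_{00}=e^{-(1-q)\mu}$ as below, define $\theta_1=\mathbb E[Y]$, $\theta_2=q_{00}\,\mathbb E[Y\mid Z\le G]/\theta_1$ and $\theta_3=\mathrm{Var}[Y]/\theta_1^2-1/\theta_1$. Then $$\theta_1=\frac{p}{1-p}\,\frac{q}{1-q}\,(1-q_{00}),\qquad \theta_2=-\frac{q_{00}\log q_{00}}{1-q_{00}},\qquad \theta_3=\frac{2}{1-q_{00}}\Big(\frac{1-q}{q}-\theta_2+1\Big)-1.$$
   Context: Let $\mu>0$, $0<q<1$, $0<p<1$. Let $Z\sim\mathrm{Poisson}(\mu)$ and $G$ with $\mathbb P(G=k)=q^k(1-q)$ ($k\in\mathbb N_0$) be independent, $B=\min(Z,G)$, and, conditionally on $B$ (and on $Z,G$), let $Y=\sum_{i=1}^BW_i$ with $W_i$ i.i.d., $\mathbb P(W_i=k)=p^k(1-p)$, $k\in\mathbb N_0$. Here $Y$ models the photons emitted in one exposure by an initially bright Alexa 647 fluorophore, and $\{Z\le G\}$ is the event that it stays bright. *)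

From Stdlib Require Import Arith Factorial Reals Lra.
Open Scope R_scope.

Definition pois (mu : R) (z : nat) : R := exp (- mu) * mu ^ z / INR (fact z).

Definition geom (q : R) (k : nat) : R := q ^ k * (1 - q).

(* pmf of W_1 + ... + W_b, W_i i.i.d. geom p : b-fold convolution *)
Fixpoint sum_pmf (p : R) (b : nat) (k : nat) : R :=
  match b with
  | O => if Nat.eqb k 0 then 1 else 0
  | S b' => sum_f_R0 (fun j => geom p j * sum_pmf p b' (k - j)%nat) k
  end.

(* joint pmf P(Z = z, G = g, Y = y), with B = min Z G *)
Definition joint (mu q p : R) (z g y : nat) : R :=
  pois mu z * geom q g * sum_pmf p (Nat.min z g) y.

(* Nested (absolutely convergent, for nonneg terms) triple series sum over
   (z, g, y) in N^3 *)
Definition HasSum3 (F : nat -> nat -> nat -> R) (l : R) : Prop :=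
  exists (b : nat -> nat -> R) (a : nat -> R),
    (forall z g, infinite_sum (fun y => F z g y) (b z g)) /\
    (forall z, infinite_sum (fun g => b z g) (a z)) /\
    infinite_sum a l.

Definition ind_le (z g : nat) : R := if Nat.leb z g then 1 else 0.

From Stdlib Require Import Reals Lra Lia Factorial.
From Coquelicot Require Import Coquelicot.
Open Scope R_scope.

(* The three identities are computed exactly, by summing the nested series
   defining the moments of Y from the inside out.
   - Innermost (over y): conditionally on B = b, Y is a sum of b i.i.d.
     geometric variables, whose pmf is the b-fold convolution [sum_pmf p b];
     by Cauchy products its mass is 1, its mean b m and its second moment
     b s + (b m)^2, with m = p/(1-p), s = p/(1-p)^2 (geometric moments).
   - Middle (over g): averaging a function of b = min z g over G ~ geom q
     leaves a closed form in z.  For a quadratic function of b it has the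
     shape A + B q^z + C z q^z; on the event {z <= g} it is q^z f(z).
   - Outer (over z): a Poisson average of A + B q^z + C z q^z equals
     A + B q00 + C q mu q00, where q00 = e^{-(1-q) mu} = P(Z <= G). *)

Lemma is_series_congr (a b : nat -> R) (la lb : R) :
  is_series a la -> (forall n, a n = b n) -> la = lb -> is_series b lb.
Proof. intros Ha Hab <-. exact (is_series_ext a b la Hab Ha). Qed.

Lemma is_series_shift (a : nat -> R) (n : nat) (l : R) : (0 < n)%nat ->
  is_series (fun k => a (n + k)%nat) l -> is_series a (l + sum_f_R0 a (pred n)).
Proof.
  intros Hn Htail. apply is_series_decr_n with n; [exact Hn |].
  rewrite sum_n_Reals.
  match goal with |- is_series _ ?x => replace x with l end; [exact Htail |].
  unfold plus, opp; simpl; ring.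
Qed.

Lemma is_series_scale (c : R) (a : nat -> R) (l : R) :
  is_series a l -> is_series (fun n => c * a n) (c * l).
Proof. exact (is_series_scal c a l). Qed.

Lemma is_series_add (a b : nat -> R) (la lb : R) :
  is_series a la -> is_series b lb -> is_series (fun n => a n + b n) (la + lb).
Proof. exact (is_series_plus a b la lb). Qed.

Lemma is_series_comb (c d : R) (a b : nat -> R) (la lb : R) :
  is_series a la -> is_series b lb ->
  is_series (fun n => c * a n + d * b n) (c * la + d * lb).
Proof. intros Ha Hb. apply is_series_add; apply is_series_scale; assumption. Qed.

Definition conv (a b : nat -> R) (n : nat) : R :=
  sum_f_R0 (fun k => a k * b (n - k)%nat) n.

Lemma conv_series (a b : nat -> R) (la lb : R) :
  (forall n, 0 <= a n) -> (forall n, 0 <= b n) ->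
  is_series a la -> is_series b lb -> is_series (conv a b) (la * lb).
Proof. intros Ha Hb Sa Sb. exact (is_series_mult_pos a b la lb Sa Sb Ha Hb). Qed.

Lemma conv_nonneg (a b : nat -> R) (n : nat) :
  (forall n, 0 <= a n) -> (forall n, 0 <= b n) -> 0 <= conv a b n.
Proof. intros Ha Hb. apply cond_pos_sum. intro; apply Rmult_le_pos; auto. Qed.

(* Pointwise moment identities for a convolution: n = k + (n - k) expanded
   to degrees 1 and 2. *)
Lemma conv_moment1 (a b : nat -> R) (n : nat) :
  INR n * conv a b n = conv (fun k => INR k * a k) b n + conv a (fun k => INR k * b k) n.
Proof.
  unfold conv. rewrite <- plus_sum, scal_sum. apply sum_eq. intros i Hi.
  rewrite minus_INR by exact Hi. ring.
Qed.

Lemma conv_moment2 (a b : nat -> R) (n : nat) :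
  INR n ^ 2 * conv a b n =
  conv (fun k => INR k ^ 2 * a k) b n
  + 2 * conv (fun k => INR k * a k) (fun k => INR k * b k) n
  + conv a (fun k => INR k ^ 2 * b k) n.
Proof.
  unfold conv. rewrite scal_sum, scal_sum, <- !plus_sum. apply sum_eq. intros i Hi.
  rewrite minus_INR by exact Hi. ring.
Qed.

Lemma conv_moments (a c : nat -> R) (la ma va lc mc vc : R) :
  (forall n, 0 <= a n) -> (forall n, 0 <= c n) ->
  is_series a la -> is_series (fun n => INR n * a n) ma ->
  is_series (fun n => INR n ^ 2 * a n) va ->
  is_series c lc -> is_series (fun n => INR n * c n) mc ->
  is_series (fun n => INR n ^ 2 * c n) vc ->
  is_series (conv a c) (la * lc) /\
  is_series (fun n => INR n * conv a c n) (ma * lc + la * mc) /\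
  is_series (fun n => INR n ^ 2 * conv a c n) (va * lc + 2 * (ma * mc) + la * vc).
Proof.
  intros Ha Hc A0 A1 A2 C0 C1 C2.
  assert (Hweight : forall (e : nat -> R) k,
            (forall n, 0 <= e n) -> forall n, 0 <= INR n ^ k * e n)
    by (intros e k He n; apply Rmult_le_pos; auto using pow_le, pos_INR).
  assert (Ha1 : forall n, 0 <= INR n * a n)
    by (intro n; rewrite <- (pow_1 (INR n)); apply Hweight, Ha).
  assert (Hc1 : forall n, 0 <= INR n * c n)
    by (intro n; rewrite <- (pow_1 (INR n)); apply Hweight, Hc).
  split; [| split].
  - apply conv_series; assumption.
  - eapply is_series_congr;
      [apply is_series_add;
         [apply (conv_series _ _ _ _ Ha1 Hc A1 C0) | apply (conv_series _ _ _ _ Ha Hc1 A0 C1)] |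
       intro n; rewrite conv_moment1; reflexivity | reflexivity].
  - eapply is_series_congr;
      [apply is_series_add;
         [apply is_series_add;
            [apply (conv_series _ _ _ _ (Hweight a 2%nat Ha) Hc A2 C0) |
             apply is_series_scale, (conv_series _ _ _ _ Ha1 Hc1 A1 C1)] |
          apply (conv_series _ _ _ _ Ha (Hweight c 2%nat Hc) A0 C2)] |
       intro n; rewrite conv_moment2; reflexivity | reflexivity].
Qed.

Lemma sum_succ_INR (n : nat) :
  sum_f_R0 (fun k => INR (S k)) n = INR (S n) * INR (S (S n)) / 2.
Proof. induction n as [|n IH]; [simpl; field |]. rewrite tech5, IH, !S_INR. field. Qed.

Section Geometric.
Variable r : R.
Hypothesis r_ge0 : 0 <= r.
Hypothesis r_lt1 : r < 1.

Lemma pow_r_nonneg (n : nat) : 0 <= r ^ n.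
Proof. apply pow_le, r_ge0. Qed.

Lemma geometric_series : is_series (fun n => r ^ n) (/ (1 - r)).
Proof. apply is_series_geom. rewrite Rabs_pos_eq; assumption. Qed.

(* sum (n+1) r^n = (1-r)^-2, as the square of the geometric series. *)
Lemma geometric_series1 : is_series (fun n => INR (S n) * r ^ n) (/ (1 - r) ^ 2).
Proof.
  eapply is_series_congr;
    [apply (conv_series (fun n => r ^ n) (fun n => r ^ n));
       auto using pow_r_nonneg, geometric_series | | field; lra].
  intro n; unfold conv. rewrite (sum_eq _ (fun _ => r ^ n)).
  - rewrite sum_cte. ring.
  - intros i Hi. rewrite <- pow_add. f_equal. lia.
Qed.

(* sum (n+1)(n+2)/2 r^n = (1-r)^-3, as a further product with it. *)
Lemma geometric_series2 :
  is_series (fun n => INR (S n) * INR (S (S n)) / 2 * r ^ n) (/ (1 - r) ^ 3).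
Proof.
  assert (Hnonneg : forall n, 0 <= INR (S n) * r ^ n)
    by (intro n; apply Rmult_le_pos; auto using pos_INR, pow_r_nonneg).
  eapply is_series_congr;
    [apply (conv_series (fun n => INR (S n) * r ^ n) (fun n => r ^ n));
       auto using pow_r_nonneg, geometric_series, geometric_series1 | | field; lra].
  intro n; unfold conv.
  rewrite (sum_eq _ (fun k => INR (S k) * r ^ n)).
  - rewrite <- scal_sum, sum_succ_INR. field.
  - intros i Hi. rewrite Rmult_assoc, <- pow_add. do 2 f_equal. lia.
Qed.

Lemma geom_nonneg (n : nat) : 0 <= geom r n.
Proof. unfold geom. apply Rmult_le_pos; [apply pow_r_nonneg | lra]. Qed.

Lemma geom_mass : is_series (geom r) 1.
Proof.
  eapply is_series_congr; [apply (is_series_scale (1 - r)), geometric_series | |].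
  - intro n; unfold geom; ring.
  - field; lra.
Qed.

Lemma geom_mean : is_series (fun n => INR n * geom r n) (r / (1 - r)).
Proof.
  eapply is_series_congr;
    [apply (is_series_comb (1 - r) (r - 1));
       [apply geometric_series1 | apply geometric_series] | |].
  - intro n; unfold geom; rewrite S_INR; ring.
  - field; lra.
Qed.

Lemma geom_moment2 :
  is_series (fun n => INR n ^ 2 * geom r n) (r * (1 + r) / (1 - r) ^ 2).
Proof.
  eapply is_series_congr;
    [apply (is_series_comb 1 (1 - r));
       [apply (is_series_comb (2 * (1 - r)) (-3 * (1 - r)));
          [apply geometric_series2 | apply geometric_series1] |
        apply geometric_series] | |].
  - intro n; unfold geom; rewrite !S_INR; field.
  - field; lra.
Qed.

End Geometric.

Lemma is_series_at_0 (a : nat -> R) :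
  (forall k, a (S k) = 0) -> is_series a (a 0%nat).
Proof.
  intro Ha.
  replace (a 0%nat) with (0 + sum_f_R0 a (pred 1)) by (simpl; ring).
  apply is_series_shift; [lia |].
  eapply is_series_congr;
    [apply (is_series_scale 0), (geometric_series 0); lra |
     intro k; simpl; rewrite Ha; ring | ring].
Qed.

Section CompoundGeometric.
Variable p : R.
Hypothesis p_gt0 : 0 < p.
Hypothesis p_lt1 : p < 1.

Lemma sum_pmf_moments (b : nat) :
  (forall k, 0 <= sum_pmf p b k) /\
  is_series (sum_pmf p b) 1 /\
  is_series (fun k => INR k * sum_pmf p b k) (p / (1 - p) * INR b) /\
  is_series (fun k => INR k ^ 2 * sum_pmf p b k)
    (p / (1 - p) ^ 2 * INR b + (p / (1 - p)) ^ 2 * INR b ^ 2).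
Proof.
  induction b as [|b (N & M0 & M1 & M2)].
  - repeat split.
    + intro k; simpl; destruct (Nat.eqb k 0); lra.
    + apply is_series_at_0; reflexivity.
    + match goal with |- is_series ?a _ => replace (_ * INR 0) with (a 0%nat) by (simpl; ring) end.
      apply is_series_at_0; intro; simpl; ring.
    + match goal with |- is_series ?a _ => replace (_ + _) with (a 0%nat) by (simpl; ring) end.
      apply is_series_at_0; intro; simpl; ring.
  - change (sum_pmf p (S b)) with (conv (geom p) (sum_pmf p b)).
    destruct (conv_moments (geom p) (sum_pmf p b) _ _ _ _ _ _
                (geom_nonneg p ltac:(lra) p_lt1) N
                (geom_mass p ltac:(lra) p_lt1) (geom_mean p ltac:(lra) p_lt1)
                (geom_moment2 p ltac:(lra) p_lt1) M0 M1 M2) as (S0 & S1 & S2).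
    repeat split.
    + intro k; apply conv_nonneg; [apply geom_nonneg; lra | exact N].
    + eapply is_series_congr; [exact S0 | intro; reflexivity | ring].
    + eapply is_series_congr; [exact S1 | intro; reflexivity | rewrite S_INR; ring].
    + eapply is_series_congr; [exact S2 | intro; reflexivity | rewrite S_INR; field; lra].
Qed.

End CompoundGeometric.

Fixpoint sum_below (h : nat -> R) (z : nat) : R :=
  match z with O => 0 | S z' => sum_below h z' + h z' end.

Lemma sum_below_sum_f_R0 (h : nat -> R) (n : nat) : sum_below h (S n) = sum_f_R0 h n.
Proof. induction n as [|n IH]; [simpl; ring |]. rewrite tech5, <- IH. reflexivity. Qed.

Section TruncatedGeometric.
Variable q : R.
Hypothesis q_gt0 : 0 < q.
Hypothesis q_lt1 : q < 1.

(* Averaging f (min z G) over G ~ geom q: the values g < z contribute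
   individually, while {G >= z} has probability q^z and contributes f z. *)
Lemma geom_min_series (f : nat -> R) (z : nat) :
  is_series (fun g => geom q g * f (Nat.min z g))
    (q ^ z * f z + sum_below (fun g => geom q g * f g) z).
Proof.
  assert (Gmass := geom_mass q ltac:(lra) q_lt1).
  destruct z as [|z].
  - eapply is_series_congr;
      [apply (is_series_scale (f 0%nat)), Gmass | intro; simpl; ring | simpl; ring].
  - rewrite sum_below_sum_f_R0.
    replace (sum_f_R0 (fun g => geom q g * f g) z)
      with (sum_f_R0 (fun g => geom q g * f (Nat.min (S z) g)) (pred (S z))).
    + apply is_series_shift; [lia |].
      eapply is_series_congr; [apply (is_series_scale (q ^ S z * f (S z))), Gmass | | ring].
      intro k. rewrite Nat.min_l by lia. unfold geom; rewrite pow_add; ring.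
    + apply sum_eq. intros i Hi. rewrite Nat.min_r by lia. reflexivity.
Qed.

Lemma geom_min_series_le (f : nat -> R) (z : nat) :
  is_series (fun g => ind_le z g * (geom q g * f (Nat.min z g))) (q ^ z * f z).
Proof.
  assert (Gmass := geom_mass q ltac:(lra) q_lt1).
  destruct z as [|z].
  - eapply is_series_congr; [apply (is_series_scale (f 0%nat)), Gmass |
      intro; unfold ind_le; simpl; ring | simpl; ring].
  - set (h := fun g => ind_le (S z) g * (geom q g * f (Nat.min (S z) g))).
    replace (q ^ S z * f (S z)) with (q ^ S z * f (S z) + sum_f_R0 h (pred (S z))).
    + apply is_series_shift; [lia |].
      eapply is_series_congr; [apply (is_series_scale (q ^ S z * f (S z))), Gmass | | ring].
      intro k. unfold h, ind_le. rewrite (proj2 (Nat.leb_le _ _)), Nat.min_l by lia.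
      unfold geom; rewrite pow_add; ring.
    + rewrite (sum_eq _ (fun _ => 0)); [rewrite sum_cte; ring |].
      intros i Hi. unfold h, ind_le. rewrite (proj2 (Nat.leb_gt _ _)) by lia. ring.
Qed.

(* Closed form of the above for a quadratic f b = alpha b + beta b^2: with
   E[G] = q/(1-q) and E[G^2] = q(1+q)/(1-q)^2, the average is
   A - A q^z - 2 beta E[G] z q^z where A = alpha E[G] + beta E[G^2]
   (by the memoryless property; proved here by induction on z). *)
Lemma geom_min_quadratic (alpha beta : R) (z : nat) :
  let A := alpha * (q / (1 - q)) + beta * (q * (1 + q) / (1 - q) ^ 2) in
  is_series (fun g => geom q g * (alpha * INR (Nat.min z g) + beta * INR (Nat.min z g) ^ 2))
    (A + - A * q ^ z + - (2 * beta * (q / (1 - q))) * (INR z * q ^ z)).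
Proof.
  intro A.
  set (f := fun b : nat => alpha * INR b + beta * INR b ^ 2).
  eapply is_series_congr; [apply (geom_min_series f z) | intro; reflexivity |].
  induction z as [|z IH]; [unfold f; simpl; ring |].
  cbn [sum_below].
  set (T := sum_below _ z) in *.
  replace T with (A + - A * q ^ z + - (2 * beta * (q / (1 - q))) * (INR z * q ^ z) - q ^ z * f z)
    by lra.
  unfold f, geom, A; rewrite S_INR; simpl pow; field; lra.
Qed.

End TruncatedGeometric.

Lemma exp_series (x : R) : is_series (fun n => x ^ n / INR (fact n)) (exp x).
Proof.
  eapply is_series_congr; [exact (is_exp_Reals x) | | reflexivity].
  intro n. rewrite pow_n_pow. reflexivity.
Qed.

Lemma exp_series_weighted (x : R) :
  is_series (fun n => INR n * (x ^ n / INR (fact n))) (x * exp x).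
Proof.
  replace (x * exp x) with (x * exp x + sum_f_R0 (fun n => INR n * (x ^ n / INR (fact n))) (pred 1))
    by (simpl; ring).
  apply is_series_shift; [lia |].
  eapply is_series_congr; [apply (is_series_scale x), (exp_series x) | | reflexivity].
  intro k. simpl plus. rewrite fact_simpl, mult_INR, !S_INR. simpl pow.
  assert (0 <= INR k) by apply pos_INR.
  assert (INR (fact k) <> 0) by apply INR_fact_neq_0.
  field. split; [assumption | lra].
Qed.

(* Poisson average of A + B q^z + C z q^z, with E[q^Z] = q00 and
   E[Z q^Z] = q mu q00 where q00 = e^{-(1-q) mu}. *)
Lemma poisson_average (mu q A B C : R) :
  let q00 := exp (- ((1 - q) * mu)) in
  is_series (fun z => pois mu z * (A + B * q ^ z + C * (INR z * q ^ z)))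
    (A + B * q00 + C * (q * mu * q00)).
Proof.
  intro q00.
  assert (Hq00 : q00 = exp (- mu) * exp (q * mu))
    by (unfold q00; rewrite <- exp_plus; f_equal; ring).
  assert (Hmass : exp (- mu) * exp mu = 1)
    by (rewrite <- exp_plus, Rplus_opp_l; apply exp_0).
  eapply is_series_congr;
    [apply (is_series_scale (exp (- mu))), is_series_add;
       [apply (is_series_comb A B); [apply (exp_series mu) | apply (exp_series (q * mu))] |
        apply (is_series_scale C), (exp_series_weighted (q * mu))] | |].
  - intro n. unfold pois. rewrite Rpow_mult_distr.
    assert (INR (fact n) <> 0) by apply INR_fact_neq_0. field; assumption.
  - rewrite Hq00. replace A with (A * (exp (- mu) * exp mu)) at 2 by (rewrite Hmass; ring).
    ring.
Qed.

Lemma HasSum3_congr (F F' : nat -> nat -> nat -> R) (l l' : R) :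
  HasSum3 F l -> (forall z g y, F z g y = F' z g y) -> l = l' -> HasSum3 F' l'.
Proof.
  intros [b [a [Hy [Hg Hz]]]] HF <-. exists b, a. split; [| split; assumption].
  intros z g. apply is_series_Reals.
  eapply is_series_congr; [apply is_series_Reals, Hy | intro y; apply HF | reflexivity].
Qed.

(* The three-layer summation of a moment of the model.  [phi] is the
   function of Y, [w] a weight on (Z, G); [M b] is the phi-moment of the
   compound sum given B = b, and [N z] its G-average given Z = z. *)
Lemma HasSum3_joint (mu q p : R) (w : nat -> nat -> R) (phi M N : nat -> R) (L : R) :
  (forall b, is_series (fun y => phi y * sum_pmf p b y) (M b)) ->
  (forall z, is_series (fun g => w z g * (geom q g * M (Nat.min z g))) (N z)) ->
  is_series (fun z => pois mu z * N z) L ->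
  HasSum3 (fun z g y => w z g * phi y * joint mu q p z g y) L.
Proof.
  intros HM HN HL.
  exists (fun z g => pois mu z * (w z g * (geom q g * M (Nat.min z g)))),
         (fun z => pois mu z * N z).
  split; [| split]; [intros z g | intro z | ]; apply is_series_Reals.
  - eapply is_series_congr;
      [apply (is_series_scale (pois mu z * w z g * geom q g)), (HM (Nat.min z g)) |
       intro y; unfold joint; ring | ring].
  - apply is_series_scale, HN.
  - exact HL.
Qed.

Section Moments.
Variables mu q p : R.
Hypothesis q_gt0 : 0 < q.
Hypothesis q_lt1 : q < 1.

Lemma moment_of_quadratic (phi : nat -> R) (alpha beta : R) :
  (forall b, is_series (fun y => phi y * sum_pmf p b y) (alpha * INR b + beta * INR b ^ 2)) ->
  let A := alpha * (q / (1 - q)) + beta * (q * (1 + q) / (1 - q) ^ 2) in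
  let q00 := exp (- ((1 - q) * mu)) in
  HasSum3 (fun z g y => phi y * joint mu q p z g y)
    (A + - A * q00 + - (2 * beta * (q / (1 - q))) * (q * mu * q00)).
Proof.
  intros HM A q00.
  eapply HasSum3_congr;
    [eapply (HasSum3_joint mu q p (fun _ _ => 1) phi) | intros; cbv beta; ring | reflexivity];
    [exact HM | | apply poisson_average].
  intro z.
  eapply is_series_congr;
    [apply (geom_min_quadratic q q_gt0 q_lt1 alpha beta z) | intro; cbv beta; ring | reflexivity].
Qed.

Lemma moment_on_bright (phi : nat -> R) (c0 c1 : R) :
  (forall b, is_series (fun y => phi y * sum_pmf p b y) (c0 + c1 * INR b)) ->
  let q00 := exp (- ((1 - q) * mu)) in
  HasSum3 (fun z g y => phi y * ind_le z g * joint mu q p z g y)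
    (0 + c0 * q00 + c1 * (q * mu * q00)).
Proof.
  intros HM q00.
  eapply HasSum3_congr;
    [eapply (HasSum3_joint mu q p ind_le phi) | intros; cbv beta; ring | reflexivity];
    [exact HM | | apply poisson_average].
  intro z.
  eapply is_series_congr;
    [apply (geom_min_series_le q q_gt0 q_lt1 (fun b => c0 + c1 * INR b) z) | intro; reflexivity |].
  cbv beta; ring.
Qed.

Hypothesis p_gt0 : 0 < p.
Hypothesis p_lt1 : p < 1.

Lemma mean_Y :
  let q00 := exp (- ((1 - q) * mu)) in
  HasSum3 (fun z g y => INR y * joint mu q p z g y) (p / (1 - p) * (q / (1 - q)) * (1 - q00)).
Proof.
  intro q00.
  eapply HasSum3_congr;
    [apply (moment_of_quadratic INR (p / (1 - p)) 0) | intros; reflexivity | unfold q00; ring].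
  intro b. destruct (sum_pmf_moments p p_gt0 p_lt1 b) as (_ & _ & Hmean & _).
  eapply is_series_congr; [exact Hmean | intros; reflexivity | ring].
Qed.

Lemma second_moment_Y :
  let q00 := exp (- ((1 - q) * mu)) in
  HasSum3 (fun z g y => INR y ^ 2 * joint mu q p z g y)
    ((p / (1 - p) ^ 2 * (q / (1 - q)) + (p / (1 - p)) ^ 2 * (q * (1 + q) / (1 - q) ^ 2))
       * (1 - q00)
     - 2 * (p / (1 - p)) ^ 2 * (q / (1 - q)) * (q * mu * q00)).
Proof.
  intro q00.
  eapply HasSum3_congr;
    [apply (moment_of_quadratic (fun y => INR y ^ 2) (p / (1 - p) ^ 2) ((p / (1 - p)) ^ 2)) |
     intros; reflexivity | unfold q00; ring].
  intro b. destruct (sum_pmf_moments p p_gt0 p_lt1 b) as (_ & _ & _ & Hsecond). exact Hsecond.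
Qed.

Lemma mean_Y_bright :
  let q00 := exp (- ((1 - q) * mu)) in
  HasSum3 (fun z g y => INR y * ind_le z g * joint mu q p z g y) (p / (1 - p) * (q * mu * q00)).
Proof.
  intro q00.
  eapply HasSum3_congr;
    [apply (moment_on_bright INR 0 (p / (1 - p))) | intros; reflexivity | unfold q00; ring].
  intro b. destruct (sum_pmf_moments p p_gt0 p_lt1 b) as (_ & _ & Hmean & _).
  eapply is_series_congr; [exact Hmean | intros; reflexivity | ring].
Qed.

Lemma prob_bright :
  let q00 := exp (- ((1 - q) * mu)) in
  HasSum3 (fun z g y => ind_le z g * joint mu q p z g y) q00.
Proof.
  intro q00.
  eapply HasSum3_congr;
    [apply (moment_on_bright (fun _ => 1) 1 0) | intros; cbv beta; ring | unfold q00; ring].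
  intro b. destruct (sum_pmf_moments p p_gt0 p_lt1 b) as (_ & Hmass & _ & _).
  eapply is_series_congr; [exact Hmass | intros; ring | ring].
Qed.

End Moments.

(* Main theorem: the four sums are the moments computed above, and the
   identities for theta1, theta2, theta3 are then field identities once
   ln q00 is replaced by -(1-q) mu. *)
Theorem mainTheorem11 (mu q p : R) (hmu : 0 < mu) (hq0 : 0 < q) (hq1 : q < 1)
  (hp0 : 0 < p) (hp1 : p < 1) :
  let q00 := exp (- ((1 - q) * mu)) in
  exists EY EY2 EYb Pb : R,
    HasSum3 (fun z g y => INR y * joint mu q p z g y) EY /\
    HasSum3 (fun z g y => INR y ^ 2 * joint mu q p z g y) EY2 /\
    HasSum3 (fun z g y => INR y * ind_le z g * joint mu q p z g y) EYb /\
    HasSum3 (fun z g y => ind_le z g * joint mu q p z g y) Pb /\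
    let theta1 := EY in
    let theta2 := q00 * (EYb / Pb) / theta1 in
    let theta3 := (EY2 - EY ^ 2) / theta1 ^ 2 - 1 / theta1 in
    theta1 = p / (1 - p) * (q / (1 - q)) * (1 - q00) /\
    theta2 = - (q00 * ln q00) / (1 - q00) /\
    theta3 = 2 / (1 - q00) * ((1 - q) / q - theta2 + 1) - 1.
Proof.
  intro q00.
  eexists _, _, _, _.
  split; [apply (mean_Y mu q p hq0 hq1 hp0 hp1) |].
  split; [apply (second_moment_Y mu q p hq0 hq1 hp0 hp1) |].
  split; [apply (mean_Y_bright mu q p hq0 hq1 hp0 hp1) |].
  split; [apply (prob_bright mu q p hq0 hq1 hp0 hp1) |].
  cbv zeta; fold q00.
  assert (Hq00 : 0 < q00 < 1).
  { split; [apply exp_pos |]. rewrite <- exp_0. apply exp_increasing.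
    assert (0 < (1 - q) * mu) by (apply Rmult_lt_0_compat; lra). lra. }
  assert (Hln : ln q00 = - ((1 - q) * mu)) by apply ln_exp.
  assert (Htheta2 : q00 * (p / (1 - p) * (q * mu * q00) / q00)
                      / (p / (1 - p) * (q / (1 - q)) * (1 - q00))
                    = - (q00 * ln q00) / (1 - q00)).
  { rewrite Hln. field. repeat split; lra. }
  split; [reflexivity | split; [exact Htheta2 |]].
  rewrite Htheta2, Hln. field. repeat split; lra.
Qed.
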